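(* Consider an ordered storyline instance and $\Delta,\overline{\Delta}\in\mathbb{N}$. For each $k\in\mathbb{N}$, if there is a $(\Delta,\overline{\Delta})$-nice coordination with total wiggle count $k$, then there is a $(\Delta,\overline{\Delta})$-nice coordination with total wiggle count at most $k$ all of whose coordinates are integers.
   Context: Write $[n]=\{1,\dots,n\}$. An ordered storyline instance consists of characters $\mathcal{C}$, time steps $[\ell]$, meetings $\mathcal{M}$ (each meeting $M$ has a time step $\mathrm{tm}(M)$ and character set $\mathrm{char}(M)$), for each character $c$ a set $A(c)$ of consecutive active time steps, and for each $t$ a permutation $\pi_t$ of the active characters $\mathrm{Ac}(t)=\{c: t\in A(c)\}$ in which the characters of each meeting at time $t$ are consecutive; $c\prec_t c'$ means $c$ precedes $c'$ in $\pi_t$. A coordination assigns a real $y_{t,c}$ to each $t$ and $c\in\mathrm{Ac}(t)$; it is valid if $c\prec_t c'$ implies $y_{t,c}<y_{t,c'}$; it is $(\Delta,\overline{\Delta})$-nice if valid and for all $t$ and all $c,c'$ consecutive in $\pi_t$, $|y_{t,c'}-y_{t,c}|=\Delta$ if $c,c'$ lie in a common meeting at time $t$, and $|y_{t,c'}-y_{t,c}|\ge\overline{\Delta}$ otherwise. The total wiggle count is $\mathrm{WC}(y)=|\{(t,c): 1\le t\le\ell-1,\ c\in\mathrm{Ac}(t)\cap\mathrm{Ac}(t+1),\ y_{t,c}\ne y_{t+1,c}\}|$. *)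

From HB Require Import structures.
From mathcomp Require Import all_boot all_order all_algebra.
From mathcomp Require Import reals.
Set Implicit Arguments. Unset Strict Implicit. Unset Printing Implicit Defensive.
Import Order.TTheory GRing.Theory Num.Theory.
Local Open Scope ring_scope.

(* Time steps are the naturals 1..ell.
   A meeting M is a pair (tm M, char M).
   active c t  <->  t \in A(c).
   perm_at t   is the permutation pi_t, listed from first to last. *)
Record storyline (C : finType) := Storyline {
  ell : nat;
  meetings : seq (nat * {set C});
  active : C -> nat -> bool;
  perm_at : nat -> seq C }.

Definition in_time (C : finType) (I : storyline C) (t : nat) : bool :=
  (1 <= t <= ell I)%N.

Definition wf_storyline (C : finType) (I : storyline C) : Prop :=
  (forall c t, active I c t -> in_time I t) /\
  (forall c t1 t2 t, active I c t1 -> active I c t2 ->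
      (t1 <= t <= t2)%N -> active I c t) /\
  (forall t, in_time I t ->
      uniq (perm_at I t) /\ forall c, (c \in perm_at I t) = active I c t) /\
  (forall M, M \in meetings I ->
      in_time I M.1 /\
      exists s, infix s (perm_at I M.1) /\ forall c, (c \in s) = (c \in M.2)).

Definition common_meeting (C : finType) (I : storyline C) (t : nat) (c c' : C) :=
  has (fun M : nat * {set C} => [&& M.1 == t, c \in M.2 & c' \in M.2])
      (meetings I).

Definition prec (C : finType) (I : storyline C) (t : nat) (c c' : C) : bool :=
  [&& c \in perm_at I t, c' \in perm_at I t &
      (index c (perm_at I t) < index c' (perm_at I t))%N].

(* A coordination: y t c is meaningful only for t in [ell], c in Ac(t). *)
Definition valid (R : realType) (C : finType) (I : storyline C)
    (y : nat -> C -> R) : Prop :=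
  forall t c c', in_time I t -> prec I t c c' -> y t c < y t c'.

Definition nice (R : realType) (C : finType) (I : storyline C)
    (D Db : R) (y : nat -> C -> R) : Prop :=
  valid I y /\
  forall t c c' s1 s2, in_time I t ->
    perm_at I t = s1 ++ c :: c' :: s2 ->
    (if common_meeting I t c c' then `|y t c' - y t c| = D
     else Db <= `|y t c' - y t c|).

Definition wiggle_count (R : realType) (C : finType) (I : storyline C)
    (y : nat -> C -> R) : nat :=
  (\sum_(1 <= t < ell I)
     #|[set c | [&& active I c t, active I c t.+1 & y t c != y t.+1 c]]|)%N.

Definition integral_coord (R : realType) (C : finType) (I : storyline C)
    (y : nat -> C -> R) : Prop :=
  forall t c, in_time I t -> active I c t -> exists z : int, y t c = z%:~R.

From HB Require Import structures.
From mathcomp Require Import all_boot all_order all_algebra.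
From mathcomp Require Import reals.
Set Implicit Arguments. Unset Strict Implicit. Unset Printing Implicit Defensive.
Import Order.TTheory GRing.Theory Num.Theory.
Local Open Scope ring_scope.

(* Round every coordinate down.  Since the floor commutes with adding an
   integer, a gap of exactly D between neighbours stays exactly D and a gap
   of at least Db stays at least Db; both are positive integers (D > 0 because
   the original order was strict), so the order stays strict.  Equal
   coordinates have equal floors, so no new wiggle appears. *)

Section FloorGaps.

Context {R : realType}.

Lemma floorDn (x : R) (n : nat) : Num.floor (x + n%:R) = Num.floor x + n%:Z.
Proof. by rewrite floorDrz ?natr_int // pmulrn intrKfloor. Qed.

Lemma floor_gap_eq_nat (x x' : R) (n : nat) :
  x' - x = n%:R -> (Num.floor x')%:~R - (Num.floor x)%:~R = n%:R :> R.
Proof.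
move=> gap; have -> : x' = x + n%:R by rewrite -gap addrC subrK.
by rewrite floorDn rmorphD /= addrC addKr -pmulrn.
Qed.

Lemma floor_gap_ge_nat (x x' : R) (n : nat) :
  n%:R <= x' - x -> n%:R <= (Num.floor x')%:~R - (Num.floor x)%:~R :> R.
Proof.
rewrite !lerBrDl => /le_floor; rewrite floorDn -(ler_int R) rmorphD /=.
by rewrite -pmulrn.
Qed.

End FloorGaps.

Definition floor_coord {R : realType} {C : Type} (y : nat -> C -> R) :
  nat -> C -> R := fun t c => (Num.floor (y t c))%:~R.

Lemma sorted_of_adjacent (T : Type) (r : rel T) (s : seq T) :
  (forall s1 s2 a b, s = s1 ++ a :: b :: s2 -> r a b) -> sorted r s.
Proof.
case: s => // a s; elim: s a => //= b s IH a adj.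
rewrite (adj [::] s a b erefl) /=.
by apply: IH => s1 s2 x z E; apply: (adj (a :: s1) s2); rewrite E.
Qed.

Lemma prec_adjacent (C : finType) (I : storyline C) t s1 s2 c c' :
  uniq (perm_at I t) -> perm_at I t = s1 ++ c :: c' :: s2 -> prec I t c c'.
Proof.
move=> U E; rewrite /prec E !mem_cat !inE !eqxx /= orbT.
move: U; rewrite E cat_uniq => /and3P [_ disj /andP [+ _]].
rewrite inE negb_or => /andP [/negPf cc' _].
have notin_s1 x : x \in [:: c, c' & s2] -> (x \in s1) = false.
  by move=> xs; apply/negP => xs1; move/hasP: disj; apply; exists x.
by rewrite !index_cat !notin_s1 ?inE ?eqxx ?orbT //= !eqxx cc' ltn_add2l.
Qed.

Section Coordinations.

Variables (R : realType) (C : finType) (I : storyline C).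

Hypothesis uniq_perm : forall t, in_time I t -> uniq (perm_at I t).

Lemma valid_of_adjacent (y : nat -> C -> R) :
  (forall t c c' s1 s2, in_time I t -> perm_at I t = s1 ++ c :: c' :: s2 ->
     y t c < y t c') -> valid I y.
Proof.
move=> adj t c c' It /and3P [cin c'in idx].
have S : sorted (fun a b => y t a < y t b) (perm_at I t).
  by apply: sorted_of_adjacent => s1 s2 a b; apply: adj.
apply: (sorted_ltn_index _ S) => //.
by move=> a b d /=; apply: lt_trans.
Qed.

Lemma nice_floor_coord (D Db : nat) (y : nat -> C -> R) :
  (0 < Db)%N -> nice I D%:R Db%:R y -> nice I D%:R Db%:R (floor_coord y).
Proof.
move=> Db_gt0 [y_valid y_gaps].
have adj t c c' s1 s2 : in_time I t -> perm_at I t = s1 ++ c :: c' :: s2 ->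
    0 < floor_coord y t c' - floor_coord y t c /\
    (if common_meeting I t c c' then
       floor_coord y t c' - floor_coord y t c = D%:R
     else Db%:R <= floor_coord y t c' - floor_coord y t c).
  move=> It E; have := y_gaps t c c' s1 s2 It E.
  have y_lt : 0 < y t c' - y t c.
    rewrite subr_gt0; apply: y_valid => //.
    by apply: prec_adjacent E; exact: uniq_perm.
  rewrite (gtr0_norm y_lt); case: ifP => _ gap.
  - by rewrite (floor_gap_eq_nat gap) -gap.
  - have fgap := floor_gap_ge_nat gap.
    by split=> //; apply: lt_le_trans fgap; rewrite ltr0n.
split.
- apply: valid_of_adjacent => t c c' s1 s2 It E.
  by rewrite -subr_gt0; case: (adj t c c' s1 s2 It E).
- move=> t c c' s1 s2 It E; have [pos gap] := adj t c c' s1 s2 It E.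
  by rewrite (gtr0_norm pos).
Qed.

Lemma wiggle_count_comp (R' : realType) (f : R -> R') (y : nat -> C -> R) :
  (wiggle_count I (fun t c => f (y t c)) <= wiggle_count I y)%N.
Proof.
apply: leq_sum => t _; apply: subset_leq_card; apply/subsetP => c.
rewrite !inE => /and3P [-> -> /=]; apply: contra => /eqP ->; exact: eqxx.
Qed.

End Coordinations.

Theorem lemma11 (R : realType) (C : finType) (I : storyline C)
    (D Db : nat) (k : nat) :
  wf_storyline I -> (0 < Db)%N ->
  forall y : nat -> C -> R,
    nice I D%:R Db%:R y -> wiggle_count I y = k ->
    exists y' : nat -> C -> R,
      [/\ nice I D%:R Db%:R y', (wiggle_count I y' <= k)%N &
          integral_coord I y'].
Proof.
move=> [_ [_ [perm_ok _]]] Db_gt0 y y_nice <-.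
have uniq_perm t : in_time I t -> uniq (perm_at I t) by case/perm_ok.
exists (floor_coord y); split.
- exact: nice_floor_coord.
- exact: (wiggle_count_comp _ (fun x => (Num.floor x)%:~R)).
- by move=> t c _ _; exists (Num.floor (y t c)).
Qed.
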